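(* Let $\mathcal{M}$ be a mechanism with $n$ agents and let $D=(\mathbf{d}^0,\mathbf{d}^1,\dots,\mathbf{d}^T)$ be generated by best-response dynamics with random player order. Fix an agent $i$, a property $P_1$ of the others' declarations $\mathbf{d}_{-i}$, and a property $P_2$ of agent $i$'s declaration $d_i$. Suppose that for every profile, if $P_1(\mathbf{d}_{-i})$ is false then every best response $d_i$ of agent $i$ to $\mathbf{d}_{-i}$ satisfies $P_2(d_i)$. Then for every $\epsilon>0$, if $T>\epsilon^{-1}n$, with probability at least $1-e^{-T\epsilon^2/32n}$ there are at least $(\frac12-\epsilon)T$ steps $t$ for which $P_1(\mathbf{d}^t_{-i})$ or $P_2(d_i^t)$ is true.
   Context: Best-response dynamics with random player order: starting from an initial profile $\mathbf{d}^0$, at each step $t=1,\dots,T$ one agent is chosen independently and uniformly at random from the $n$ agents; that agent may change his declaration to a best response, i.e. a declaration $d\in\arg\max_d u_i(d,\mathbf{d}_{-i}^{t-1})$ maximizing his utility given the others' current declarations (he keeps his previous declaration if he cannot improve his utility); all other agents keep their declarations. *)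

From HB Require Import structures.
From mathcomp Require Import all_boot all_order all_algebra.
From mathcomp Require Import reals.
From mathcomp Require Import sequences exp.
Set Implicit Arguments. Unset Strict Implicit. Unset Printing Implicit Defensive.
Import Order.TTheory GRing.Theory Num.Theory.
Local Open Scope ring_scope.

Definition profile (A : Type) (n : nat) := 'I_n -> A.

Definition upd (A : Type) (n : nat) (p : profile A n) (j : 'I_n) (d : A)
  : profile A n := fun k => if k == j then d else p k.

Definition best_response (R : realType) (A : Type) (n : nat)
  (u : 'I_n -> profile A n -> R) (j : 'I_n) (p : profile A n) (d : A) : Prop :=
  forall d' : A, u j (upd p j d') <= u j (upd p j d).

Definition br_step (R : realType) (A : Type) (n : nat)
  (u : 'I_n -> profile A n -> R) (j : 'I_n) (p q : profile A n) : Prop :=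
  [/\ forall k, k != j -> q k = p k,
      best_response u j p (q j)
    & best_response u j p (p j) -> q j = p j].

(* The sample space is the set of sequences w of chosen agents (w t is the
   agent chosen at step t.+1), drawn uniformly from {ffun 'I_T -> 'I_n}.
   D w t is the profile d^t along the realisation w.  The choice among best
   responses may be arbitrary (adversarial), but non-anticipating: d^t only
   depends on the agents chosen at steps 1..t. *)
Definition br_dynamics (R : realType) (A : Type) (n T : nat)
  (u : 'I_n -> profile A n -> R) (d0 : profile A n)
  (D : {ffun 'I_T -> 'I_n} -> nat -> profile A n) : Prop :=
  [/\ forall w : {ffun 'I_T -> 'I_n}, D w 0 = d0,
      forall (w : {ffun 'I_T -> 'I_n}) (t : 'I_T), br_step u (w t) (D w t) (D w t.+1)
    & forall (w w' : {ffun 'I_T -> 'I_n}) (t : nat), (t <= T)%N ->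
        (forall k : 'I_T, (k < t)%N -> w k = w' k) -> D w t = D w' t].

Definition unif_prob (R : realType) (n T : nat)
  (E : {set {ffun 'I_T -> 'I_n}}) : R := #|E|%:R / (n ^ T)%:R.

From HB Require Import structures.
From mathcomp Require Import all_boot all_order all_algebra.
From mathcomp Require Import reals.
From mathcomp Require Import sequences exp.
From mathcomp Require Import ring lra.
Set Implicit Arguments. Unset Strict Implicit. Unset Printing Implicit Defensive.
Import Order.TTheory GRing.Theory Num.Theory.
Local Open Scope ring_scope.

(* Let the potential of a profile d be 0 if P2 (d i), n if P1 d and not
   P2 (d i), and n - 1 otherwise.  Along a best-response step, the quantity
   1 - 2 [P1 or P2 holds after the step] plus the change of potential is at
   most c (n - 1) if agent i moves and - c if another agent moves, for some
   c in {-1, 0, 1} determined by the profile before the step: a move of agent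
   i while P1 fails lands in P2 and releases the potential.  These increments
   are centred under the uniform choice of the mover, so summing over the T
   steps, fewer than (1/2 - eps) T steps with P1 or P2 force (as the
   potential is at most n < eps T) a walk with nonanticipating centred
   increments above eps T.  An Azuma-Hoeffding
   exponential-moment bound, with exp(lam y) <= 1 + y + 2 y^2 and
   lam = eps / (4 n), makes this happen with probability at most
   exp (- T eps^2 / (8 n)). *)

Lemma expR_le_quadratic (R : realType) (y : R) :
  y <= 1 / 2 -> expR y <= 1 + y + 2 * y ^+ 2.
Proof.
move=> y_le.
have lower : 1 - y <= expR (- y) := expR_ge1Dx (- y).
have y_lt1 : 0 < 1 - y by lra.
rewrite -[expR y]invrK -expRN.
apply: (@le_trans _ _ (1 - y)^-1); first by rewrite lef_pV2 ?posrE ?expR_gt0.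
rewrite -(@ler_pM2l _ (1 - y)) // mulrV ?unitfE ?gt_eqF //.
have -> : (1 - y) * (1 + y + 2 * y ^+ 2) = 1 + y ^+ 2 * (1 - 2 * y).
  by rewrite !expr2; ring.
by rewrite lerDl mulr_ge0 ?sqr_ge0 //; lra.
Qed.

Definition centred_step (R : nzRingType) (n : nat) (i : 'I_n) (c : R) (j : 'I_n) : R :=
  c * (if j == i then n%:R - 1 else -1).

Lemma sum_expR_centred_step_le (R : realType) (n : nat) (i : 'I_n) (c lam : R) :
  -1 <= c <= 1 -> 0 <= lam -> lam * n%:R <= 1 / 2 ->
  \sum_j expR (lam * centred_step i c j) <= n%:R * expR (2 * lam ^+ 2 * n%:R).
Proof.
move=> /andP[c_ge c_le] lam_ge0 lam_le.
have n_ge1 : 1 <= n%:R :> R by rewrite ler1n (leq_ltn_trans _ (ltn_ord i)).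
rewrite (bigD1 i) //= /centred_step eqxx.
rewrite (eq_bigr (fun=> expR (- (lam * c)))); last first.
  by move=> j /negbTE ->; rewrite mulrN1 mulrN.
rewrite sumr_const cardC1 card_ord -[_ *+ n.-1]mulr_natl -subn1.
rewrite natrB ?(leq_ltn_trans _ (ltn_ord i)) //.
set m := n%:R in n_ge1 lam_le *.
have lam_le_half : lam <= 1 / 2 by nra.
have lc_le : - (lam * c) <= 1 / 2 by nra.
have lcm_le : lam * (c * (m - 1)) <= 1 / 2.
  have : 0 <= lam * (m - 1) * (1 - c) by rewrite !mulr_ge0 //; lra.
  nra.
apply: (@le_trans _ _ (m * (1 + 2 * lam ^+ 2 * m))); last first.
  by apply: ler_wpM2l; [lra | exact: expR_ge1Dx].
have m1_ge0 : 0 <= m - 1 by lra.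
apply: le_trans (lerD (expR_le_quadratic lcm_le)
  (ler_wpM2l m1_ge0 (expR_le_quadratic lc_le))) _.
have c2_le : c ^+ 2 <= 1 by rewrite expr2; nra.
have slack : 0 <= lam ^+ 2 * m * (m - c ^+ 2 * (m - 1)).
  by rewrite mulr_ge0 ?mulr_ge0 ?sqr_ge0 //; nra.
(* The first-order terms cancel since the step is centred. *)
rewrite !expr2 in slack c2_le *; nra.
Qed.

Section NonanticipatingProducts.

Variables (R : realType) (n T : nat).
Local Notation seqs := {ffun 'I_T -> 'I_n}.

Definition ffun_upd (w : seqs) (k : 'I_T) (x : 'I_n) : seqs :=
  [ffun j => if j == k then x else w j].

Lemma ffun_upd_lt (w : seqs) (k j : 'I_T) (x : 'I_n) :
  (j < k)%N -> ffun_upd w k x j = w j.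
Proof. by move=> jk; rewrite ffunE -val_eqE /= ltn_eqF. Qed.

Lemma ffun_upd_eq (w : seqs) (k : 'I_T) (x : 'I_n) : ffun_upd w k x k = x.
Proof. by rewrite ffunE eqxx. Qed.

Lemma ffun_upd_upd (w : seqs) (k : 'I_T) (x y : 'I_n) :
  ffun_upd (ffun_upd w k x) k y = ffun_upd w k y.
Proof. by apply/ffunP => j; rewrite !ffunE; case: eqP. Qed.

Lemma ffun_upd_id (w : seqs) (k : 'I_T) : ffun_upd w k (w k) = w.
Proof. by apply/ffunP => j; rewrite !ffunE; case: eqP => [->|]. Qed.

Definition nonanticipating (X : Type) (g : seqs -> 'I_T -> X) : Prop :=
  forall (w w' : seqs) (t : 'I_T),
    (forall k : 'I_T, (k < t)%N -> w k = w' k) -> g w t = g w' t.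

(* [(w, x) |-> (w with w k := x, w k)] is an involution of [seqs * 'I_n]. *)
Lemma sum_eval_coord (k : 'I_T) (F : seqs -> 'I_n -> R) :
  (forall w x y, F (ffun_upd w k x) y = F w y) ->
  n%:R * \sum_w F w (w k) = \sum_w \sum_x F w x.
Proof.
move=> F_upd.
pose h (p : seqs * 'I_n) := (ffun_upd p.1 k p.2, p.1 k).
have hK : involutive h.
  by case=> w x; rewrite /h /= ffun_upd_eq ffun_upd_upd ffun_upd_id.
have -> : n%:R * \sum_w F w (w k) = \sum_w \sum_(x : 'I_n) F w (w k).
  by rewrite mulr_sumr; apply: eq_bigr => w _; rewrite sumr_const card_ord mulr_natl.
rewrite !pair_big [RHS](reindex_inj (inv_inj hK)) /=.
by apply: eq_bigr => p _; rewrite /h /= F_upd.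
Qed.

(* Induction on m: the last factor is averaged out over the m-th coordinate,
   on which the other factors do not depend. *)
Lemma sum_prod_nonanticipating_le (g : seqs -> 'I_T -> 'I_n -> R) (c : R) :
  (0 < n)%N -> 0 <= c -> (forall w t x, 0 <= g w t x) -> nonanticipating g ->
  (forall w t, \sum_x g w t x <= n%:R * c) ->
  forall m, (m <= T)%N ->
  \sum_w \prod_(t : 'I_T | (t < m)%N) g w t (w t) <= (n ^ T)%:R * c ^+ m.
Proof.
move=> n_gt0 c_ge0 g_ge0 g_na g_le; elim=> [|m IHm] m_lt.
  under eq_bigr do rewrite big_pred0 //.
  by rewrite sumr_const card_ffun !card_ord expr0 mulr1.
pose k := Ordinal m_lt.
pose G w := \prod_(t : 'I_T | (t < m)%N) g w t (w t).
have G_ge0 w : 0 <= G w by apply: prodr_ge0 => t _.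
have G_upd w x : G (ffun_upd w k x) = G w.
  apply: eq_bigr => t t_lt; rewrite ffun_upd_lt // (g_na _ w) // => j j_lt.
  by rewrite ffun_upd_lt // (ltn_trans j_lt).
have g_upd w x : g (ffun_upd w k x) k = g w k.
  by apply: g_na => j j_lt; rewrite ffun_upd_lt.
have split_last w : \prod_(t : 'I_T | (t < m.+1)%N) g w t (w t) = G w * g w k (w k).
  rewrite (bigD1 k) //= mulrC; congr (_ * _); apply: eq_bigl => t.
  by rewrite ltnS ltn_neqAle andbC -val_eqE.
have n_pos : 0 < n%:R :> R by rewrite ltr0n.
under eq_bigr do rewrite split_last.
rewrite -(ler_pM2l n_pos) (sum_eval_coord (F := fun w x => G w * g w k x)); last first.
  by move=> w x y; rewrite G_upd g_upd.
apply: (@le_trans _ _ (\sum_w G w * (n%:R * c))).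
  by apply: ler_sum => w _; rewrite -mulr_sumr ler_wpM2l.
rewrite -mulr_suml mulrCA ler_wpM2l ?ler0n // exprSr mulrA ler_wpM2r //.
exact: IHm (ltnW m_lt).
Qed.

Lemma card_sum_gt_le (Y : seqs -> 'I_T -> 'I_n -> R) (lam b a : R) :
  (0 < n)%N -> 0 <= lam -> nonanticipating Y ->
  (forall w t, \sum_x expR (lam * Y w t x) <= n%:R * expR b) ->
  #|[set w | a < \sum_t Y w t (w t)]|%:R <=
    (n ^ T)%:R * expR (b * T%:R - lam * a).
Proof.
move=> n_gt0 lam_ge0 Y_na Y_le.
set S := fun w => \sum_t Y w t (w t).
have markov : #|[set w | a < S w]|%:R * expR (lam * a) <= \sum_w expR (lam * S w).
  rewrite mulr_natl -sumr_const.
  apply: (@le_trans _ _ (\sum_(w in [set w | a < S w]) expR (lam * S w))).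
    by apply: ler_sum => w; rewrite inE => /ltW a_le; rewrite ler_expR ler_wpM2l.
  rewrite [X in _ <= X](bigID [in [set w | a < S w]]) /= lerDl.
  by apply: sumr_ge0 => w _; exact: expR_ge0.
have moment : \sum_w expR (lam * S w) <= (n ^ T)%:R * expR b ^+ T.
  have g_na : nonanticipating (fun w t x => expR (lam * Y w t x)).
    by move=> w w' t /Y_na ->.
  rewrite (eq_bigr (fun w => \prod_(t : 'I_T | (t < T)%N) expR (lam * Y w t (w t)))).
    exact: (sum_prod_nonanticipating_le (g := fun w t x => expR (lam * Y w t x))
      n_gt0 (expR_ge0 b) (fun _ _ _ => expR_ge0 _) g_na Y_le (leqnn T)).
  by move=> w _; rewrite mulr_sumr expR_sum; apply: eq_bigl => t; rewrite ltn_ord.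
rewrite expRB mulrA ler_pdivlMr ?expR_gt0 // expRM_natr.
exact: le_trans markov moment.
Qed.

End NonanticipatingProducts.

Lemma card_centred_walk_gt_le (R : realType) (n T : nat) (i : 'I_n)
    (c : {ffun 'I_T -> 'I_n} -> 'I_T -> R) (eps : R) :
  0 < eps -> eps <= 2 -> nonanticipating c -> (forall w t, -1 <= c w t <= 1) ->
  #|[set w | eps * T%:R < \sum_t centred_step i (c w t) (w t)]|%:R <=
    (n ^ T)%:R * expR (- (T%:R * eps ^+ 2) / (8 * n%:R)).
Proof.
move=> eps_gt0 eps_le2 c_na c_bounded.
have n_gt0 : (0 < n)%N by rewrite (leq_ltn_trans _ (ltn_ord i)).
have n_pos : 0 < n%:R :> R by rewrite ltr0n.
pose lam := eps / (4 * n%:R).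
have lam_ge0 : 0 <= lam by rewrite divr_ge0 ?mulr_ge0 ?ler0n // ltW.
have lam_n : lam * n%:R = eps / 4 by rewrite /lam; field; rewrite gt_eqF.
have step_na : nonanticipating (fun w t => centred_step i (c w t)).
  by move=> w w' t /c_na ->.
have step_mgf w t : \sum_x expR (lam * centred_step i (c w t) x) <=
    n%:R * expR (2 * lam ^+ 2 * n%:R).
  by apply: sum_expR_centred_step_le => //; rewrite lam_n; lra.
apply: le_trans (card_sum_gt_le (eps * T%:R) n_gt0 lam_ge0 step_na step_mgf) _.
rewrite ler_wpM2l ?ler0n // ler_expR.
suff -> : 2 * lam ^+ 2 * n%:R * T%:R - lam * (eps * T%:R) =
  - (T%:R * eps ^+ 2) / (8 * n%:R) by rewrite lexx.
by rewrite /lam; field; rewrite gt_eqF.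
Qed.

Lemma unif_prob_ge (R : realType) (n T : nat) (E : {set {ffun 'I_T -> 'I_n}}) (x : R) :
  (0 < n)%N -> #|~: E|%:R <= (n ^ T)%:R * x -> 1 - x <= unif_prob R E.
Proof.
move=> n_gt0 compl_le.
have N_gt0 : 0 < (n ^ T)%:R :> R by rewrite ltr0n expn_gt0 n_gt0.
have card_split : #|E|%:R + #|~: E|%:R = (n ^ T)%:R :> R.
  by rewrite -natrD cardsC card_ffun !card_ord.
rewrite /unif_prob ler_pdivlMr //; lra.
Qed.

Section BestResponseDrift.

Variables (R : realType) (A : Type) (n : nat).
Variables (u : 'I_n -> profile A n -> R) (i : 'I_n).
Variables (P1 : profile A n -> bool) (P2 : A -> bool).
Hypothesis P1_indep : forall p q : profile A n,
  (forall j, j != i -> p j = q j) -> P1 p = P1 q.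
Hypothesis br_P2 : forall p : profile A n, ~~ P1 p ->
  forall d : A, best_response u i p d -> P2 d.

Definition potential (d : profile A n) : R :=
  if P2 (d i) then 0 else if P1 d then n%:R else n%:R - 1.

Definition drift_scale (d : profile A n) : R :=
  if P1 d then (if P2 (d i) then 1 else 0) else (if P2 (d i) then 0 else -1).

Lemma drift_scale_bounded (d : profile A n) : -1 <= drift_scale d <= 1.
Proof.
by rewrite /drift_scale; case: (P1 d); case: (P2 (d i)); apply/andP; split; lra.
Qed.

Lemma br_step_drift_le (j : 'I_n) (p q : profile A n) :
  br_step u j p q ->
  1 - 2 * (P1 q || P2 (q i))%:R + potential q - potential p <=
    centred_step i (drift_scale p) j.
Proof.
case=> others_fixed q_br _.
have n_ge1 : 1 <= n%:R :> R by rewrite ler1n (leq_ltn_trans _ (ltn_ord i)).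
rewrite /potential /drift_scale /centred_step.
case: (eqVneq j i) => [j_eq_i|j_neq_i]; first subst j.
  have -> : P1 q = P1 p by apply: P1_indep => k /others_fixed.
  have P2_q : ~~ P1 p -> P2 (q i) by move=> notP1; exact: br_P2 notP1 _ q_br.
  by move: P2_q; case: (P1 p); case: (P2 (p i)); case: (P2 (q i)) => //= P2_q;
    rewrite ?(P2_q isT); lra.
rewrite others_fixed 1?eq_sym //.
by case: (P1 p); case: (P2 (p i)); case: (P1 q) => /=; lra.
Qed.

Lemma card_P1_or_P2_steps_ge (T : nat) (d : nat -> profile A n) (a : 'I_T -> 'I_n) :
  (forall t : 'I_T, br_step u (a t) (d t) (d t.+1)) ->
  T%:R - 2 * #|[set t : 'I_T | P1 (d t.+1) || P2 (d t.+1 i)]|%:R <=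
    \sum_(t < T) centred_step i (drift_scale (d t)) (a t) + n%:R.
Proof.
move=> steps.
have n_ge1 : 1 <= n%:R :> R by rewrite ler1n (leq_ltn_trans _ (ltn_ord i)).
have potential_ge0 t : 0 <= potential (d t).
  by rewrite /potential; case: ifP => _; [|case: ifP => _]; lra.
have potential_le t : potential (d t) <= n%:R.
  by rewrite /potential; case: ifP => _; [|case: ifP => _]; lra.
have telescope : \sum_(t < T) (potential (d t.+1) - potential (d t)) =
    potential (d T) - potential (d 0).
  by rewrite -(big_mkord xpredT (fun t => potential (d t.+1) - potential (d t)))
    telescope_sumr.
have count_good : \sum_(t < T) (1 - 2 * (P1 (d t.+1) || P2 (d t.+1 i))%:R : R) =
    T%:R - 2 * #|[set t : 'I_T | P1 (d t.+1) || P2 (d t.+1 i)]|%:R.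
  rewrite sumrB sumr_const card_ord -mulr_sumr -sum1_card natr_sum.
  congr (_ - 2 * _); rewrite [RHS]big_mkcond /=.
  by apply: eq_bigr => t _; rewrite inE; case: (_ || _).
have drift : \sum_(t < T) (1 - 2 * (P1 (d t.+1) || P2 (d t.+1 i))%:R
      + (potential (d t.+1) - potential (d t))) <=
    \sum_(t < T) centred_step i (drift_scale (d t)) (a t).
  by apply: ler_sum => t _; rewrite addrA; exact: br_step_drift_le.
rewrite big_split /= count_good telescope in drift.
by have := potential_ge0 T; have := potential_le 0%N; lra.
Qed.

End BestResponseDrift.

Theorem lemma4p2 (R : realType) (A : Type) (n : nat)
  (u : 'I_n -> profile A n -> R) (i : 'I_n)
  (P1 : profile A n -> bool) (P2 : A -> bool)
  (P1_minus_i : forall p q : profile A n,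
      (forall j, j != i -> p j = q j) -> P1 p = P1 q)
  (hyp : forall p : profile A n, ~~ P1 p ->
      forall d : A, best_response u i p d -> P2 d)
  (eps : R) (eps_gt0 : 0 < eps) (T : nat) (hT : n%:R / eps < T%:R)
  (d0 : profile A n) (D : {ffun 'I_T -> 'I_n} -> nat -> profile A n)
  (hD : br_dynamics u d0 D) :
  1 - expR (- (T%:R * eps ^+ 2) / (32 * n%:R)) <=
  unif_prob R
    [set w : {ffun 'I_T -> 'I_n} |
       (1 / 2 - eps) * T%:R <=
       #|[set t : 'I_T | P1 (D w t.+1) || P2 (D w t.+1 i)]|%:R].
Proof.
case: hD => _ steps prefix_determined.
have n_gt0 : (0 < n)%N by rewrite (leq_ltn_trans _ (ltn_ord i)).
apply: (unif_prob_ge n_gt0); set bad := ~: _.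
have [eps_ge | eps_lt] := lerP (1 / 2) eps.
  suff -> : bad = set0 by rewrite cards0 mulr_ge0 ?ler0n ?expR_ge0.
  apply/setP => w; rewrite /bad !inE (le_trans _ (ler0n _ _)) //.
  by rewrite mulr_le0_ge0 ?ler0n //; lra.
pose c w (t : 'I_T) := drift_scale R i P1 P2 (D w t).
have c_na : nonanticipating c.
  by move=> w w' t same_prefix; rewrite /c (prefix_determined w w') // ltnW.
have bad_sub : bad \subset [set w | eps * T%:R < \sum_t centred_step i (c w t) (w t)].
  apply/subsetP => w; rewrite !inE -ltNge => few_good.
  have := card_P1_or_P2_steps_ge P1_minus_i hyp (steps w).
  by move: hT; rewrite ltr_pdivrMr ?ltr0n // => hT'; lra.
apply: le_trans (_ : _ <= (n ^ T)%:R * expR (- (T%:R * eps ^+ 2) / (8 * n%:R))) _.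
  apply: le_trans _ (card_centred_walk_gt_le i eps_gt0 _ c_na _).
  - by rewrite ler_nat subset_leq_card.
  - lra.
  - by move=> w t; exact: drift_scale_bounded.
have n_pos : 0 < n%:R :> R by rewrite ltr0n.
rewrite ler_wpM2l ?ler0n // ler_expR !mulNr lerN2.
apply: ler_wpM2l; first by rewrite mulr_ge0 ?ler0n ?sqr_ge0.
by rewrite lef_pV2 ?posrE ?mulr_gt0 // ler_pM2r //; lra.
Qed.
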